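(* Let $L$ be a $\kappa$-frame and $I$ a $\kappa$-ideal of $L$. Among the congruences $D\in\mathbb{C}L$ with $\nabla_I\le D$ and $c\ell(D)\le\nabla_I$ there is a largest one, denoted $\partial_I$; it is the congruence corresponding to $\mathfrak{D}_{L/\nabla_I}$ under the correspondence between $\mathbb{C}(L/\nabla_I)$ and congruences on $L$ containing $\nabla_I$, and \[\partial_I=\{(a,b)\in L\times L\mid \text{for all } x\in L:\ a\wedge x\in I \iff b\wedge x\in I\}.\]
   Context: $\kappa$ is a fixed regular cardinal; a $\kappa$-frame is a bounded distributive lattice having joins of all subsets of cardinality $<\kappa$ and satisfying the frame distributive law for such joins. A $\kappa$-ideal is a downset in which every subset of cardinality $<\kappa$ has an upper bound. A congruence is an equivalence relation which is a sub-$\kappa$-frame of $L\times L$; $\mathbb{C}L$ is the frame of congruences under inclusion. $\nabla_a=\{(x,y)\mid x\vee a=y\vee a\}$, $\nabla_I=\bigvee_{a\in I}\nabla_a$. A congruence is closed if it is a join of congruences $\nabla_a$; $c\ell(C)$ is the largest closed congruence contained in $C$. For any $\kappa$-frame $M$, $\mathfrak{D}_M=\{(a,b)\mid \forall x\in M:\ a\wedge x=0\iff b\wedge x=0\}$, which is the largest congruence $D$ on $M$ with $c\ell(D)$ equal to the trivial (diagonal) congruence (Madden). *)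

From Stdlib Require Import Classical.
Set Implicit Arguments.

(** Cardinals are represented by types: the cardinal kappa is |K| for a type K. *)
Definition injective {A B : Type} (f : A -> B) : Prop :=
  forall x y, f x = f y -> x = y.

Definition lt_card (T K : Type) : Prop :=
  (exists f : T -> K, injective f) /\ ~ (exists g : K -> T, injective g).

Definition regular_card (K : Type) : Prop :=
  (exists f : nat -> K, injective f) /\
  (forall (I : Type) (F : I -> Type),
      lt_card I K -> (forall i, lt_card (F i) K) -> lt_card {i : I & F i} K).

Definition small (K : Type) {T : Type} (S : T -> Prop) : Prop :=
  lt_card {x : T | S x} K.

Definition is_lub {T : Type} (le : T -> T -> Prop) (S : T -> Prop) (s : T) : Prop :=
  (forall x, S x -> le x s) /\ (forall u, (forall x, S x -> le x u) -> le s u).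

Record kFrame (K : Type) : Type := {
  kcar :> Type;
  kle : kcar -> kcar -> Prop;
  kle_refl : forall x, kle x x;
  kle_trans : forall x y z, kle x y -> kle y z -> kle x z;
  kle_antisym : forall x y, kle x y -> kle y x -> x = y;
  kbot : kcar;
  ktop : kcar;
  kmeet : kcar -> kcar -> kcar;
  kjoin : kcar -> kcar -> kcar;
  kbot_least : forall x, kle kbot x;
  ktop_greatest : forall x, kle x ktop;
  kmeet_glb : forall x y z, kle z (kmeet x y) <-> (kle z x /\ kle z y);
  kjoin_lub : forall x y z, kle (kjoin x y) z <-> (kle x z /\ kle y z);
  kdistr : forall x y z, kmeet x (kjoin y z) = kjoin (kmeet x y) (kmeet x z);
  ksup_ex : forall S : kcar -> Prop, small K S -> exists s, is_lub kle S s;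
  kframe_distr : forall (S : kcar -> Prop) (s a : kcar), small K S -> is_lub kle S s ->
      is_lub kle (fun y => exists x, S x /\ y = kmeet a x) (kmeet a s)
}.

Arguments kle {K} _ _ _.
Arguments kbot {K} _.
Arguments ktop {K} _.
Arguments kmeet {K} _ _ _.
Arguments kjoin {K} _ _ _.

Section KFrameDefs.
Context {K : Type} (L : kFrame K).

Definition rel := L -> L -> Prop.

Definition incl (C D : rel) : Prop := forall x y, C x y -> D x y.
Definition releq (C D : rel) : Prop := forall x y, C x y <-> D x y.

Definition kideal (I : L -> Prop) : Prop :=
  (forall x y, kle L x y -> I y -> I x) /\
  (forall S : L -> Prop, small K S -> (forall x, S x -> I x) ->
      exists u, I u /\ forall x, S x -> kle L x u).

(** Congruence: an equivalence relation which is a sub-kappa-frame of L x L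
    (operations of L x L are componentwise). *)
Definition congruence (C : rel) : Prop :=
  (forall x, C x x) /\
  (forall x y, C x y -> C y x) /\
  (forall x y z, C x y -> C y z -> C x z) /\
  C (kbot L) (kbot L) /\ C (ktop L) (ktop L) /\
  (forall a b c d, C a b -> C c d -> C (kmeet L a c) (kmeet L b d)) /\
  (forall a b c d, C a b -> C c d -> C (kjoin L a c) (kjoin L b d)) /\
  (forall (S : L * L -> Prop), small K S -> (forall p, S p -> C (fst p) (snd p)) ->
     forall u v,
       is_lub (kle L) (fun y => exists p, S p /\ y = fst p) u ->
       is_lub (kle L) (fun y => exists p, S p /\ y = snd p) v ->
       C u v).

Definition cong_join {J : Type} (F : J -> rel) : rel :=
  fun x y => forall C, congruence C -> (forall j, incl (F j) C) -> C x y.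

Definition nabla (a : L) : rel := fun x y => kjoin L x a = kjoin L y a.

Definition nablaI (I : L -> Prop) : rel :=
  cong_join (fun a : {a : L | I a} => nabla (proj1_sig a)).

Definition closed (C : rel) : Prop :=
  exists S : L -> Prop, releq C (cong_join (fun a : {a : L | S a} => nabla (proj1_sig a))).

Definition cl (C : rel) : rel :=
  cong_join (fun D : {D : rel | closed D /\ incl D C} => proj1_sig D).

(** The congruence on L corresponding, under CC(L/theta) ~ {congruences >= theta},
    to frak-D of the quotient L/theta.  In L/theta: [a] /\ [x] = [a /\ x],
    0 = [0], and [y] = [z] iff theta y z; so ([a],[b]) in frak-D_{L/theta} iff
    for all x in L, (theta (a/\x) 0 <-> theta (b/\x) 0). *)
Definition frakD_quot (theta : rel) : rel :=
  fun a b => forall x : L,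
    theta (kmeet L a x) (kbot L) <-> theta (kmeet L b x) (kbot L).

End KFrameDefs.

(* Let a ~ b mean that a /\ x is in I exactly when b /\ x is, for
   every x.  This is a congruence (for joins of fewer than kappa elements by the
   frame distributive law, since I is closed under such joins), its kernel
   {c | c ~ 0} is I, and every congruence with kernel I is contained in it.
   Each nabla_a with a in I lies in ~, so nabla_I does too; hence nabla_I
   identifies c with 0 exactly when c is in I, which is the description of ~ as
   frak-D of L/nabla_I.  Finally, nabla_c is the least congruence identifying c
   with 0, so for a congruence D we have cl(D) <= nabla_I iff D(c, 0) forces
   c in I; thus the congruences D >= nabla_I with cl(D) <= nabla_I are exactly
   the congruences with kernel I, and ~ is the largest of them. *)

From Stdlib Require Import Classical ClassicalEpsilon.

Set Implicit Arguments.

Section SmallSets.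
Variable K : Type.

Lemma lt_card_of_injective (A B : Type) (h : B -> A) :
  injective h -> lt_card A K -> lt_card B K.
Proof.
  intros h_inj [[f f_inj] no_inj]. split.
  - exists (fun b => f (h b)). intros x y E. apply h_inj, f_inj, E.
  - intros [g g_inj]. apply no_inj. exists (fun k => h (g k)).
    intros x y E. apply g_inj, h_inj, E.
Qed.

Lemma sig_val_inj (T : Type) (P : T -> Prop) (u v : {x | P x}) :
  proj1_sig u = proj1_sig v -> u = v.
Proof.
  destruct u as [x Px], v as [y Py]. simpl. intros <-.
  rewrite (proof_irrelevance _ Px Py). reflexivity.
Qed.

Lemma small_sub (T : Type) (P Q : T -> Prop) :
  (forall x, Q x -> P x) -> small K P -> small K Q.
Proof.
  intros QP. apply (lt_card_of_injective (h := fun q : {x | Q x} =>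
                      exist P (proj1_sig q) (QP _ (proj2_sig q)))).
  intros u v E. apply sig_val_inj. exact (f_equal (@proj1_sig _ _) E).
Qed.

Lemma small_image (A B : Type) (S : A -> Prop) (f : A -> B) :
  small K S -> small K (fun y => exists x, S x /\ y = f x).
Proof.
  set (pre := fun y : {y | exists x, S x /\ y = f x} =>
                constructive_indefinite_description _ (proj2_sig y)).
  apply (lt_card_of_injective (h := fun y =>
           exist S (proj1_sig (pre y)) (proj1 (proj2_sig (pre y))))).
  intros y y' E. apply sig_val_inj.
  rewrite (proj2 (proj2_sig (pre y))), (proj2 (proj2_sig (pre y'))).
  exact (f_equal (fun x => f (proj1_sig x)) E).
Qed.

Lemma no_injection_nat_bool : ~ exists g : nat -> bool, injective g.
Proof.
  intros [g g_inj].
  destruct (g 0) eqn:E0, (g 1) eqn:E1, (g 2) eqn:E2;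
    first [ discriminate (g_inj 0 1 ltac:(congruence))
          | discriminate (g_inj 0 2 ltac:(congruence))
          | discriminate (g_inj 1 2 ltac:(congruence)) ].
Qed.

Hypothesis K_infinite : exists f : nat -> K, injective f.

Lemma lt_card_bool : lt_card bool K.
Proof.
  destruct K_infinite as [f f_inj]. split.
  - exists (fun b : bool => if b then f 0 else f 1).
    intros [] [] E; auto; apply f_inj in E; discriminate.
  - intros [g g_inj]. apply no_injection_nat_bool.
    exists (fun n => g (f n)). intros m n E. apply f_inj, g_inj, E.
Qed.

Lemma small_pair (T : Type) (a b : T) : small K (fun x => x = a \/ x = b).
Proof.
  apply small_sub with (P := fun y => exists c : bool, True /\ y = if c then a else b).
  - intros x [-> | ->]; [exists true | exists false]; auto.
  - apply small_image.
    apply (lt_card_of_injective (h := @proj1_sig bool (fun _ => True))).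
    + intros u v. apply sig_val_inj.
    + exact lt_card_bool.
Qed.

End SmallSets.

Section Lattice.
Variables (K : Type) (L : kFrame K).
Notation le := (kle L).
Notation meet := (kmeet L).
Notation join := (kjoin L).
Notation bot := (kbot L).
Notation top := (ktop L).

Lemma kmeet_lb_l x y : le (meet x y) x.
Proof. exact (proj1 (proj1 (kmeet_glb L x y _) (kle_refl L _))). Qed.

Lemma kmeet_lb_r x y : le (meet x y) y.
Proof. exact (proj2 (proj1 (kmeet_glb L x y _) (kle_refl L _))). Qed.

Lemma kmeet_greatest x y z : le z x -> le z y -> le z (meet x y).
Proof. intros; apply kmeet_glb; auto. Qed.

Lemma kjoin_ub_l x y : le x (join x y).
Proof. exact (proj1 (proj1 (kjoin_lub L x y _) (kle_refl L _))). Qed.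

Lemma kjoin_ub_r x y : le y (join x y).
Proof. exact (proj2 (proj1 (kjoin_lub L x y _) (kle_refl L _))). Qed.

Lemma kjoin_least x y z : le x z -> le y z -> le (join x y) z.
Proof. intros; apply kjoin_lub; auto. Qed.

Local Ltac klattice :=
  repeat (apply kmeet_greatest || apply kjoin_least);
  eauto 3 using kle_trans, kmeet_lb_l, kmeet_lb_r, kjoin_ub_l, kjoin_ub_r,
    kle_refl, kbot_least, ktop_greatest.

Lemma kmeet_comm x y : meet x y = meet y x.
Proof. apply kle_antisym; klattice. Qed.

Lemma kmeet_assoc x y z : meet x (meet y z) = meet (meet x y) z.
Proof. apply kle_antisym; klattice. Qed.

Lemma kmeet_left_comm x y z : meet x (meet y z) = meet y (meet x z).
Proof. apply kle_antisym; klattice. Qed.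

Lemma kmeet_top x : meet x top = x.
Proof. apply kle_antisym; klattice. Qed.

Lemma kjoin_bot x : join x bot = x.
Proof. apply kle_antisym; klattice. Qed.

Lemma kjoin_idem x : join x x = x.
Proof. apply kle_antisym; klattice. Qed.

Lemma kbot_join x : join bot x = x.
Proof. apply kle_antisym; klattice. Qed.

Lemma kmeet_join_distr_r x y z : meet (join x y) z = join (meet x z) (meet y z).
Proof. rewrite kmeet_comm, kdistr, (kmeet_comm z x), (kmeet_comm z y). reflexivity. Qed.

End Lattice.

Section Congruences.
Variables (K : Type) (L : kFrame K).
Notation bot := (kbot L).

Lemma cong_join_ub (J : Type) (F : J -> rel L) j : incl (F j) (cong_join F).
Proof. intros x y Fxy C _ FC. exact (FC j x y Fxy). Qed.

Lemma cong_join_least (J : Type) (F : J -> rel L) C :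
  congruence C -> (forall j, incl (F j) C) -> incl (cong_join F) C.
Proof. intros HC FC x y Fxy. exact (Fxy C HC FC). Qed.

Lemma nabla_self_bot a : nabla L a a bot.
Proof. unfold nabla. rewrite kjoin_idem, kbot_join. reflexivity. Qed.

Lemma nabla_incl (C : rel L) a : congruence C -> C a bot -> incl (nabla L a) C.
Proof.
  intros (C_refl & C_sym & C_trans & _ & _ & _ & C_join & _) Ca x y E.
  assert (to_join : forall z, C z (kjoin L z a)).
  { intro z. rewrite <- (kjoin_bot L z) at 1. apply C_join; auto. }
  apply (C_trans _ _ _ (to_join x)). rewrite E. apply C_sym, to_join.
Qed.

End Congruences.

Section KIdeal.
Variables (K : Type) (L : kFrame K).
Notation le := (kle L).
Notation meet := (kmeet L).
Notation join := (kjoin L).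
Notation bot := (kbot L).
Notation top := (ktop L).

Hypothesis K_infinite : exists f : nat -> K, injective f.
Variable I : L -> Prop.
Hypothesis I_ideal : kideal L I.

Lemma kideal_down {x y} : le x y -> I y -> I x.
Proof. exact (proj1 I_ideal x y). Qed.

Lemma kideal_lub (T : L -> Prop) s :
  small K T -> is_lub le T s -> (I s <-> forall y, T y -> I y).
Proof.
  intros T_small [s_ub s_least]. split.
  - intros Is y Ty. exact (kideal_down (s_ub y Ty) Is).
  - intros IT. destruct (proj2 I_ideal T T_small IT) as [u [Iu u_ub]].
    exact (kideal_down (s_least u u_ub) Iu).
Qed.

Lemma kideal_bot : I bot.
Proof.
  destruct (proj2 I_ideal (fun _ => False)) as [u [Iu _]].
  - apply small_sub with (P := fun x => x = bot \/ x = bot); [tauto|].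
    apply small_pair, K_infinite.
  - tauto.
  - exact (kideal_down (kbot_least L u) Iu).
Qed.

Lemma kideal_join_iff x y : I (join x y) <-> I x /\ I y.
Proof.
  rewrite (kideal_lub (small_pair K_infinite x y)).
  - split; [auto | intros [] z [-> | ->]; auto].
  - split.
    + intros z [-> | ->]; [apply kjoin_ub_l | apply kjoin_ub_r].
    + intros u u_ub. apply kjoin_least; auto.
Qed.

(* The frame distributive law makes s /\ x the join of the y /\ x, y in T. *)
Lemma kideal_meet_lub (T : L -> Prop) s x :
  small K T -> is_lub le T s -> (I (meet s x) <-> forall y, T y -> I (meet y x)).
Proof.
  intros T_small s_lub. rewrite kmeet_comm.
  rewrite (kideal_lub (small_image (meet x) T_small) (kframe_distr L x T_small s_lub)).
  split.
  - intros H y Ty. rewrite kmeet_comm. eauto.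
  - intros H y [z [Tz ->]]. rewrite kmeet_comm. auto.
Qed.

Definition partialI : rel L := fun a b => forall x, I (meet a x) <-> I (meet b x).

Lemma partialI_congruence : congruence partialI.
Proof.
  unfold congruence, partialI.
  repeat match goal with |- _ /\ _ => split end.
  - reflexivity.
  - intros a b H x. symmetry. apply H.
  - intros a b c H1 H2 x. rewrite H1. apply H2.
  - reflexivity.
  - reflexivity.
  - intros a b c d H1 H2 x.
    rewrite <- !kmeet_assoc, H1, !(kmeet_left_comm L b). apply H2.
  - intros a b c d H1 H2 x.
    rewrite !kmeet_join_distr_r, !kideal_join_iff, H1, H2. reflexivity.
  - intros S S_small HS u v u_lub v_lub x.
    rewrite (kideal_meet_lub x (small_image fst S_small) u_lub),
            (kideal_meet_lub x (small_image snd S_small) v_lub).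
    split; intros H y [p [Sp ->]]; apply (HS p Sp), H; eauto.
Qed.

Lemma partialI_bot c : partialI c bot <-> I c.
Proof.
  assert (I_bot_meet : forall x, I (meet bot x)).
  { intro x. exact (kideal_down (kmeet_lb_l L bot x) kideal_bot). }
  split.
  - intros H. rewrite <- (kmeet_top L c). apply H, I_bot_meet.
  - intros Ic x. split; intros _; [apply I_bot_meet |].
    exact (kideal_down (kmeet_lb_l L c x) Ic).
Qed.

Lemma partialI_greatest (D : rel L) :
  congruence D -> (forall c, D c bot <-> I c) -> incl D partialI.
Proof.
  intros (D_refl & D_sym & D_trans & _ & _ & D_meet & _) D_ker.
  assert (transfer : forall a b x, D a b -> I (meet a x) -> I (meet b x)).
  { intros a b x Dab Iax. apply D_ker.
    apply (D_trans _ (meet a x)); [apply D_sym, D_meet, D_refl | apply D_ker]; auto. }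
  intros a b Dab x. split; apply transfer; auto.
Qed.

Lemma nablaI_incl_partialI : incl (nablaI L I) partialI.
Proof.
  apply cong_join_least; [exact partialI_congruence |].
  intros [a Ia]. apply nabla_incl; [exact partialI_congruence | apply partialI_bot, Ia].
Qed.

Lemma nablaI_bot c : nablaI L I c bot <-> I c.
Proof.
  split.
  - intros H. apply partialI_bot, nablaI_incl_partialI, H.
  - intros Ic. apply (cong_join_ub _ (exist I c Ic)), nabla_self_bot.
Qed.

Lemma frakD_quot_nablaI : releq (frakD_quot (nablaI L I)) partialI.
Proof. intros a b. unfold frakD_quot, partialI. setoid_rewrite nablaI_bot. reflexivity. Qed.

Lemma cl_incl_nablaI (D : rel L) :
  congruence D -> (incl (cl D) (nablaI L I) <-> forall c, D c bot -> I c).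
Proof.
  intros D_cong. split.
  - intros cl_D c Dc. apply nablaI_bot, cl_D.
    (* nabla_c, written as a join of nablas so that it is visibly closed *)
    set (Nc := cong_join (fun j : {j : L | j = c} => nabla L (proj1_sig j))).
    assert (Nc_closed_in_D : closed Nc /\ incl Nc D).
    { split.
      - exists (fun j => j = c). intros x y. reflexivity.
      - apply cong_join_least; [exact D_cong |].
        intros [j ->]. exact (nabla_incl D_cong Dc). }
    apply (cong_join_ub _ (exist _ Nc Nc_closed_in_D)).
    apply (cong_join_ub _ (exist (fun j => j = c) c eq_refl)), nabla_self_bot.
  - intros D_ker x y cl_xy C C_cong C_nabla. apply cl_xy; [exact C_cong |].
    intros [D' [[S D'_eq] D'_D]] u v D'uv. simpl in D'uv.
    apply D'_eq in D'uv. revert D'uv. apply (cong_join_least C_cong).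
    intros [s Ss].
    assert (Is : I s).
    { apply D_ker, D'_D, D'_eq, (cong_join_ub _ (exist _ s Ss)), nabla_self_bot. }
    exact (C_nabla (exist _ s Is)).
Qed.

End KIdeal.

Theorem mainTheorem6 (K : Type) (hK : regular_card K) (L : kFrame K)
  (I : L -> Prop) (hI : kideal L I) :
  exists partialI : rel L,
    (* partial_I is the largest congruence D with nabla_I <= D and cl(D) <= nabla_I *)
    (congruence partialI /\ incl (nablaI L I) partialI /\ incl (cl partialI) (nablaI L I) /\
     (forall D : rel L, congruence D -> incl (nablaI L I) D -> incl (cl D) (nablaI L I) ->
        incl D partialI)) /\
    (* it corresponds to frak-D of L / nabla_I *)
    releq partialI (frakD_quot (nablaI L I)) /\
    (* explicit description *)
    releq partialI (fun a b => forall x : L, I (kmeet L a x) <-> I (kmeet L b x)).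
Proof.
  pose proof (proj1 hK) as K_infinite.
  pose proof (partialI_congruence K_infinite hI) as P_cong.
  pose proof (partialI_bot K_infinite hI) as P_ker.
  exists (partialI L I). split; [split; [| split; [| split]] | split].
  - exact P_cong.
  - exact (nablaI_incl_partialI K_infinite hI).
  - apply (cl_incl_nablaI K_infinite hI P_cong). intro c. apply P_ker.
  - intros D D_cong nablaI_D cl_D. apply partialI_greatest; [exact D_cong |].
    intro c. split.
    + apply (cl_incl_nablaI K_infinite hI D_cong), cl_D.
    + intro Ic. apply nablaI_D, (nablaI_bot K_infinite hI), Ic.
  - intros a b. symmetry. apply (frakD_quot_nablaI K_infinite hI).
  - intros a b. reflexivity.
Qed.
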